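(* Let $\mathcal M$ be a companion-connected mixture of $L$ Markov chains on $n$ states, let $r=\sum_{\ell}|\mathcal C^\ell|$, let $R\in\mathbb R^{r\times r}$ be any invertible matrix, and for $k\in[n]$ put $R_{\mathrm{inv}(k)}=R^{-1}\Xi_k\in\mathbb R^{r\times L}$. Then for any states $i,j\in[n]$, the matrix $R_{\mathrm{inv}(j)}^\dagger R_{\mathrm{inv}(i)}\in\mathbb R^{L\times L}$ is the inverse of $R_{\mathrm{inv}(i)}^\dagger R_{\mathrm{inv}(j)}$ if and only if $\Xi_i=\Xi_j$ (i.e. $i$ and $j$ lie in the same connected component in every chain).
   Context: A mixture of $L$ Markov chains on $[n]$: row-stochastic $M^1,\dots,M^L\in\mathbb R^{n\times n}$ and starting vectors $s^\ell\in\mathbb R^n_{\ge0}$ with $\sum_{\ell,i}s^\ell_i=1$. For each $\ell$, $G^\ell$ is the undirected bipartite graph on $V^\pm=\{1^+,\dots,n^+,1^-,\dots,n^-\}$ with an edge $\{i^-,j^+\}$ whenever $M^\ell_{ij}>0$, and $\mathcal C^\ell$ is its set of connected components. The mixture is companion-connected if for each $j\in[n]$ there is $i\ne j$ such that for every $\ell$, $j^-$ and $i^-$ lie in the same component of $G^\ell$ as $j^+$ (so $j^+$ and $j^-$ are always in the same component; call it the component of chain $\ell$ containing $j$). Enumerate all components of all chains as $q=1,\dots,r$, $r=\sum_\ell|\mathcal C^\ell|$. For $j\in[n]$, $\Xi_j\in\{0,1\}^{r\times L}$ has $\Xi_j(q,\ell)=1$ iff the $q$-th component belongs to $\mathcal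 C^\ell$ and contains $j$, and $0$ otherwise. $A^\dagger$ denotes the Moore–Penrose pseudoinverse. *)

From HB Require Import structures.
From mathcomp Require Import all_boot all_order all_algebra.
From mathcomp Require Import reals.
From Stdlib Require Import ClassicalEpsilon.
Set Implicit Arguments. Unset Strict Implicit. Unset Printing Implicit Defensive.
Import Order.TTheory GRing.Theory Num.Theory.
Local Open Scope ring_scope.

Section Defs.
Variable R : realType.

(* The four Penrose conditions (real case: adjoint = transpose). *)
Definition penrose m n (A : 'M[R]_(m, n)) (B : 'M[R]_(n, m)) : Prop :=
  [/\ A *m B *m A = A, B *m A *m B = B,
      (A *m B)^T = A *m B & (B *m A)^T = B *m A].

(* Moore--Penrose pseudoinverse: the (unique, existing) matrix satisfying
   the Penrose conditions, picked by Hilbert's epsilon. *)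
Definition pinv m n (A : 'M[R]_(m, n)) : 'M[R]_(n, m) :=
  epsilon (inhabits 0) (fun B => penrose A B).

Definition row_stochastic n (P : 'M[R]_n) : Prop :=
  (forall i j, 0 <= P i j) /\ (forall i, \sum_j P i j = 1).

Definition is_mixture n L (M : 'I_L -> 'M[R]_n) (s : 'I_L -> 'rV[R]_n) : Prop :=
  (forall l, row_stochastic (M l)) /\
  (forall l i, 0 <= s l 0 i) /\
  \sum_l \sum_i s l 0 i = 1.

(* Vertices V^+- : inl j = j^+, inr i = i^-. *)
Definition vtx n := ('I_n + 'I_n)%type.

Definition Gedge n (P : 'M[R]_n) : rel (vtx n) :=
  fun x y => match x, y with
             | inr i, inl j => 0 < P i j
             | inl j, inr i => 0 < P i j
             | _, _ => false
             end.

Definition comps n (P : 'M[R]_n) : {set {set vtx n}} :=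
  [set [set y | connect (Gedge P) x y] | x : vtx n].

Definition all_comps n L (M : 'I_L -> 'M[R]_n) : {set 'I_L * {set vtx n}} :=
  [set p | p.2 \in comps (M p.1)].

Definition companion_connected n L (M : 'I_L -> 'M[R]_n) : Prop :=
  forall j : 'I_n, exists i : 'I_n, i != j /\
    forall l, connect (Gedge (M l)) (inl j) (inr j) /\
              connect (Gedge (M l)) (inl j) (inr i).

(* Xi_j for an enumeration e : 'I_r -> components: Xi_j(q,l) = 1 iff the
   q-th component belongs to chain l and contains j (i.e. j^+, equivalently
   j^- under companion-connectedness). *)
Definition Xi n L r (e : 'I_r -> 'I_L * {set vtx n}) (j : 'I_n) : 'M[R]_(r, L) :=
  \matrix_(q < r, l < L) (((e q).1 == l) && (inl j \in (e q).2))%:R.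

End Defs.

From HB Require Import structures.
From mathcomp Require Import all_boot all_order all_algebra.
From mathcomp Require Import reals.
From Stdlib Require Import ClassicalEpsilon.
Set Implicit Arguments. Unset Strict Implicit. Unset Printing Implicit Defensive.
Import Order.TTheory GRing.Theory Num.Theory.
Local Open Scope ring_scope.

(* Each chain splits the vertices into components, so every column of Xi_k
   contains exactly one 1: Xi_k^T Xi_k = I. Hence A_k := R^-1 Xi_k has full
   column rank and pinv A_k A_k = I, which gives the easy direction. Conversely,
   if pinv A_j A_i pinv A_i A_j = I then, with P := A_i pinv A_i the orthogonal
   projector onto the column space of A_i, pinv A_j (I - P) A_j = 0; as
   pinv A_j = (A_j^T A_j)^-1 A_j^T this gives A_j^T (I - P) A_j = 0, so
   (I - P) A_j = 0 and Xi_j = Xi_i Y for some Y. A 0/1 matrix with one 1 per column can only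
   factor through another such matrix if the two are equal. *)

Section Pseudoinverse.
Variable R : realType.

Lemma trmx_mul_self_eq0 m p (N : 'M[R]_(m, p)) : N^T *m N = 0 -> N = 0.
Proof.
move=> NTN0; apply/matrixP => a b.
have := congr1 (fun X : 'M[R]_p => X b b) NTN0.
rewrite !mxE => /psumr_eq0P sq0.
have /eqP := sq0 (fun k _ => ltac:(rewrite mxE; exact: sqr_ge0)) a isT.
by rewrite !mxE mulf_eq0 orbb => /eqP ->.
Qed.

Lemma sym_idem_quad_eq0 m p (Q : 'M[R]_m) (A : 'M[R]_(m, p)) :
  Q^T = Q -> Q *m Q = Q -> A^T *m Q *m A = 0 -> Q *m A = 0.
Proof.
move=> QT QQ AQA0; apply: trmx_mul_self_eq0.
by rewrite trmx_mul QT !mulmxA -(mulmxA _ Q Q) QQ.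
Qed.

Section LeftInvertible.
Variables (m p : nat) (A : 'M[R]_(m, p)) (D : 'M[R]_(p, m)).
Hypothesis DA : D *m A = 1%:M.

Lemma gram_unit : A^T *m A \in unitmx.
Proof.
rewrite -row_free_unit; apply: inj_row_free => v vG0.
have /trmx_mul_self_eq0 Av0 : (A *m v^T)^T *m (A *m v^T) = 0.
  by rewrite trmx_mul trmxK mulmxA -(mulmxA v) vG0 mul0mx.
apply: trmx_inj; rewrite trmx0.
by rewrite -(mul1mx v^T) -DA -mulmxA Av0 mulmx0.
Qed.

Lemma penrose_pinv : penrose A (pinv A).
Proof.
apply: epsilon_spec; set G := A^T *m A.
have GA : invmx G *m A^T *m A = 1%:M by rewrite -mulmxA mulVmx ?gram_unit.
have GT : G^T = G by rewrite /G trmx_mul trmxK.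
exists (invmx G *m A^T); split.
- by rewrite -mulmxA GA mulmx1.
- by rewrite GA mul1mx.
- by rewrite !trmx_mul trmxK trmx_inv GT mulmxA.
- by rewrite GA trmx1.
Qed.

Lemma pinv_mulmx : pinv A *m A = 1%:M.
Proof.
have [AXA _ _ _] := penrose_pinv.
by rewrite -[RHS]DA -{3}AXA !mulmxA DA mul1mx.
Qed.

End LeftInvertible.

Lemma pinv_mul_eq1_factor m p (A A' : 'M[R]_(m, p)) (D D' : 'M[R]_(p, m)) :
  D *m A = 1%:M -> D' *m A' = 1%:M ->
  pinv A' *m A *m (pinv A *m A') = 1%:M -> A' = A *m (pinv A *m A').
Proof.
move=> DA DA' H; have [AXA _ AX_sym _] := penrose_pinv DA.
have [_ XAX' AX_sym' _] := penrose_pinv DA'.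
set B := pinv A in AXA AX_sym H *; set B' := pinv A' in XAX' AX_sym' H *.
set Q := 1%:M - A *m B.
have QT : Q^T = Q by rewrite /Q linearB /= trmx1 AX_sym.
have QQ : Q *m Q = Q.
  by rewrite /Q mulmxBl mul1mx mulmxBr mulmx1 mulmxA AXA subrr subr0.
set C := B' *m B'^T.
have B'E : B' = C *m A'^T by rewrite -mulmxA -trmx_mul AX_sym' mulmxA XAX'.
have CG : C *m (A'^T *m A') = 1%:M by rewrite mulmxA -B'E (pinv_mulmx DA').
have [CU _] := mulmx1_unit CG.
have QA'0 : Q *m A' = 0.
  apply: sym_idem_quad_eq0 => //.
  have CQ0 : C *m (A'^T *m Q *m A') = 0.
    rewrite !mulmxA -B'E /Q mulmxBr mulmx1 mulmxBl (pinv_mulmx DA').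
    by rewrite !mulmxA -(mulmxA _ B) H subrr.
  by rewrite -(mulKmx CU (_ *m A')) CQ0 mulmx0.
by apply/eqP; rewrite -subr_eq0 mulmxA -[X in X - _]mul1mx -mulmxBl QA'0.
Qed.

End Pseudoinverse.

Lemma Gedge_sym (R : realType) n (P : 'M[R]_n) : symmetric (Gedge P).
Proof. by move=> [a|a] [b|b]. Qed.

Section Components.
Variables (R : realType) (n L r : nat) (M : 'I_L -> 'M[R]_n).
Variable e : 'I_r -> 'I_L * {set vtx n}.
Hypothesis e_inj : injective e.
Hypothesis e_comp : forall q, e q \in all_comps M.
Hypothesis e_onto : forall p, p \in all_comps M -> exists q, e q = p.

Lemma comp_of_mem q x : x \in (e q).2 ->
  (e q).2 = [set y | connect (Gedge (M (e q).1)) x y].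
Proof.
have := e_comp q; rewrite inE => /imsetP [x0 _ ->]; rewrite inE => x0x.
apply/setP => y; rewrite !inE; apply/idP/idP; last exact: connect_trans.
by apply: connect_trans; rewrite (sym_connect_sym (@Gedge_sym R n _)).
Qed.

Lemma comp_uniq q q' x :
  (e q).1 = (e q').1 -> x \in (e q).2 -> x \in (e q').2 -> q = q'.
Proof.
move=> E1 xq xq'; apply: e_inj.
have E2 : (e q).2 = (e q').2 by rewrite (comp_of_mem xq) (comp_of_mem xq') E1.
by move: E1 E2; case: (e q) => ? ?; case: (e q') => ? ? /= -> ->.
Qed.

Lemma comp_exists l x : exists q, (e q).1 = l /\ x \in (e q).2.
Proof.
have [|q Eq] := e_onto (p := (l, [set y | connect (Gedge (M l)) x y])).
  by rewrite inE; apply/imsetP; exists x.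
by exists q; rewrite Eq /= inE connect0.
Qed.

Lemma trXi_mulXi k : (Xi R e k)^T *m Xi R e k = 1%:M.
Proof.
apply/matrixP => l l'; rewrite !mxE.
have [q0 [E0 kq0]] := comp_exists l (inl k).
rewrite (bigD1 q0) //= big1 ?addr0; first by rewrite !mxE E0 kq0 eqxx !andbT mul1r.
move=> q qq0; rewrite !mxE; case: eqP => [Eq|]; last by rewrite mul0r.
case kq: (inl k \in (e q).2); last by rewrite mul0r.
by case/eqP: qq0; apply: (comp_uniq (x := inl k)) => //; rewrite Eq E0.
Qed.

Lemma Xi_mulmx_mem i j (Y : 'M[R]_L) q :
  Xi R e j = Xi R e i *m Y -> inl j \in (e q).2 -> inl i \in (e q).2.
Proof.
move=> E jq; apply/negPn/negP => iq.
have := congr1 (fun X : 'M[R]_(r, L) => X q (e q).1) E.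
rewrite !mxE eqxx jq big1 => [/eqP|l _]; first by rewrite pnatr_eq0.
by rewrite mxE (negbTE iq) andbF mul0r.
Qed.

Lemma Xi_mulmx_eq i j (Y : 'M[R]_L) :
  Xi R e j = Xi R e i *m Y -> Xi R e i = Xi R e j.
Proof.
move=> E; apply/matrixP => q l; rewrite !mxE.
case: eqP => //= El.
suff -> : (inl i \in (e q).2) = (inl j \in (e q).2) by [].
apply/idP/idP => [iq|]; last exact: Xi_mulmx_mem E.
have [q0 [E0 jq0]] := comp_exists l (inl j).
suff -> : q = q0 by [].
by apply: (comp_uniq (x := inl i)) => //; [rewrite El E0 | exact: Xi_mulmx_mem E jq0].
Qed.

End Components.

Theorem lemma3 (R : realType) (n L r : nat)
  (M : 'I_L -> 'M[R]_n) (s : 'I_L -> 'rV[R]_n)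
  (e : 'I_r -> 'I_L * {set vtx n}) (Rm : 'M[R]_r) :
  is_mixture M s ->
  companion_connected M ->
  (* e enumerates all components of all chains: q = 1..r *)
  injective e ->
  (forall q, e q \in all_comps M) ->
  (forall p, p \in all_comps M -> exists q, e q = p) ->
  Rm \in unitmx ->
  forall i j : 'I_n,
    let Rinv k := invmx Rm *m Xi R e k in
    (pinv (Rinv j) *m Rinv i *m (pinv (Rinv i) *m Rinv j) = 1%:M /\
     pinv (Rinv i) *m Rinv j *m (pinv (Rinv j) *m Rinv i) = 1%:M)
    <-> Xi R e i = Xi R e j.
Proof.
move=> _ _ e_inj e_comp e_onto RU i j Rinv.
have left_inv k : (Xi R e k)^T *m Rm *m Rinv k = 1%:M.
  by rewrite mulmxA -(mulmxA _ Rm) mulmxV // mulmx1 (trXi_mulXi e_inj e_comp e_onto).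
have XiE k : Xi R e k = Rm *m Rinv k by rewrite mulmxA mulmxV // mul1mx.
split=> [[Hji _] | Eij].
  apply: (Xi_mulmx_eq e_inj e_comp e_onto (Y := pinv (Rinv i) *m Rinv j)).
  have := congr1 (mulmx Rm) (pinv_mul_eq1_factor (left_inv i) (left_inv j) Hji).
  by rewrite mulmxA -(XiE i) -(XiE j).
have -> : Rinv i = Rinv j by rewrite /Rinv Eij.
by rewrite (pinv_mulmx (left_inv j)) mul1mx.
Qed.
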